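(* Consider the system of ordinary differential equations for $(T,I,V,A)$: \[ \frac{dT}{dt}=\Lambda-\mu T-\beta_0 VT,\qquad \frac{dI}{dt}=\beta_0 VT-\delta I,\qquad \frac{dV}{dt}=\omega I-cV-bAV,\qquad \frac{dA}{dt}=aVA-\sigma A, \] where all parameters $\Lambda,\mu,\beta_0,\delta,\omega,c,b,a,\sigma$ are strictly positive. Let $R_0=\frac{\beta_0\omega\Lambda}{c\delta\mu}$, $V^{is}=(R_0-1)\frac{\mu}{\beta_0}$ and $V^t=\frac{\sigma}{a}$. Assume that $\delta>\mu$ and that $(R_0-1)\frac{\mu}{\beta_0}>\frac{\sigma}{a}$ (i.e. $V^{is}>V^t$). Then this system has exactly one stable equilibrium, namely \[ T=\frac{\Lambda}{\mu+\beta_0V^t},\quad I=\frac{\beta_0\Lambda V^t}{\delta(\mu+\beta_0V^t)},\quad V=V^t,\quad A=\frac{c\,\beta_0\,(V^{is}-V^t)}{b(\mu+\beta_0V^t)}. \]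
   Context: An equilibrium is a point where all four right-hand sides vanish. ''Stable'' means (linearly, locally asymptotically) stable: all eigenvalues of the Jacobian matrix of the vector field at the equilibrium have strictly negative real parts. The other equilibria of the system are the trivial equilibrium $T=\Lambda/\mu$, $I=V=A=0$ and the ''immunosuppression'' equilibrium with $A=0$; these are not stable under the stated assumptions. *)

From HB Require Import structures.
From mathcomp Require Import all_boot all_order all_algebra.
From mathcomp Require Import reals.
From mathcomp Require Import complex.
Set Implicit Arguments. Unset Strict Implicit. Unset Printing Implicit Defensive.
Import Order.TTheory GRing.Theory Num.Theory.
Local Open Scope ring_scope.

Section HIV.
Variable R : realType.
Variables (Lam mu beta0 delta omega c b a sigma : R).

Definition fT (T I V A : R) : R := Lam - mu * T - beta0 * V * T.
Definition fI (T I V A : R) : R := beta0 * V * T - delta * I.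
Definition fV (T I V A : R) : R := omega * I - c * V - b * A * V.
Definition fA (T I V A : R) : R := a * V * A - sigma * A.

Definition is_equilibrium (T I V A : R) : Prop :=
  [/\ fT T I V A = 0, fI T I V A = 0, fV T I V A = 0 & fA T I V A = 0].

Definition jacobian (T I V A : R) : 'M[R]_4 :=
  \matrix_(i < 4, j < 4)
    nth 0 (nth [::]
      [:: [:: - mu - beta0 * V; 0; - beta0 * T; 0];
          [:: beta0 * V; - delta; beta0 * T; 0];
          [:: 0; omega; - c - b * A; - b * V];
          [:: 0; 0; a * A; a * V - sigma]] i) j.

(* linear (local asymptotic) stability: every complex eigenvalue of the
   Jacobian has strictly negative real part *)
Definition is_stable (T I V A : R) : Prop :=
  forall z : R[i],
    eigenvalue (map_mx (fun x : R => x%:C%C) (jacobian T I V A)) z ->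
    Re z < 0.
End HIV.

(* Every equilibrium has [A = 0] or [V = sigma / a].  With [A = 0] the
   equilibrium is either infection-free, where [R0 > 1] gives the (I, V) block
   a nonnegative eigenvalue, or immunosuppressive with [V = Vis], where the
   A-direction has eigenvalue [a Vis - sigma > 0].  With [V = sigma / a] the
   equilibrium is unique, and eliminating a left eigenvector for an eigenvalue
   [z] leaves [(z + p) (z + delta) (z^2 + g z + h) = delta g z (z + mu)] with
   [p > mu]; for [Re z >= 0] the left side is strictly larger in modulus,
   factor by factor, so every eigenvalue lies in the open left half-plane. *)

From mathcomp Require Import all_boot all_order all_algebra.
From mathcomp Require Import reals complex ring lra.
Set Implicit Arguments.
Unset Strict Implicit.
Unset Printing Implicit Defensive.

Import Order.TTheory GRing.Theory Num.Theory Normc.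
Local Open Scope ring_scope.
Local Open Scope complex_scope.

Section Modulus.
Variable R : rcfType.
Implicit Types (z : R[i]) (d g h m p : R).

Lemma sqr_normc z : normc z ^+ 2 = complex.Re z ^+ 2 + complex.Im z ^+ 2.
Proof. by case: z => x y; rewrite /= sqr_sqrtr // addr_ge0 ?sqr_ge0. Qed.

Lemma normc_real [d] : 0 <= d -> normc d%:C = d.
Proof. by move=> d0; rewrite /= expr0n addr0 sqrtr_sqr ger0_norm. Qed.

Lemma normc_ge0 z : 0 <= normc z.
Proof. by case: z => x y; apply: sqrtr_ge0. Qed.

Lemma ltr_normc_sqr z w : (normc z < normc w) = (normc z ^+ 2 < normc w ^+ 2).
Proof. by rewrite ltr_pXn2r // nnegrE normc_ge0. Qed.

Lemma ler_normc_sqr z w : (normc z <= normc w) = (normc z ^+ 2 <= normc w ^+ 2).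
Proof. by rewrite ler_pXn2r // nnegrE normc_ge0. Qed.

Lemma ltr_normc_addr z m p : 0 <= complex.Re z -> 0 <= m -> m < p ->
  normc (z + m%:C) < normc (z + p%:C).
Proof.
move=> x0 m0 mp; rewrite ltr_normc_sqr !sqr_normc.
by move: x0; case: z => x y /= x0; rewrite !addr0; nra.
Qed.

Lemma ler_normc_addr z d : 0 <= complex.Re z -> 0 <= d -> d <= normc (z + d%:C).
Proof.
move=> x0 d0; rewrite -{1}(normc_real d0) ler_normc_sqr !sqr_normc.
by move: x0; case: z => x y /= x0; rewrite !addr0; nra.
Qed.

Lemma ler_normc_quadratic z g h : 0 <= complex.Re z -> 0 <= g -> 0 <= h ->
  g * normc z <= normc (z ^+ 2 + g%:C * z + h%:C).
Proof.
move=> x0 g0 h0; rewrite -[X in X * _](normc_real g0) -normcM ler_normc_sqr !sqr_normc.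
move: x0; case: z => x y /= x0; rewrite !(mul0r, subr0, addr0).
set N := x ^+ 2 + y ^+ 2.
have N0 : 0 <= N by rewrite /N; nra.
have gN0 : 0 <= g * N by apply: mulr_ge0.
have gN_le : g * N <= (x + g) * N + h * x by nra.
have sqr_gN_le : (g * N) ^+ 2 <= ((x + g) * N + h * x) ^+ 2.
  by rewrite ler_pXn2r ?nnegrE //; lra.
set Q := (x * x - _ + _ + h) ^+ 2 + _.
have -> : (g * x) ^+ 2 + (g * y) ^+ 2 = g ^+ 2 * N by rewrite /N; ring.
have [-> | N_neq0] := eqVneq N 0; first by rewrite mulr0 /Q addr_ge0 ?sqr_ge0.
(* [N * Q] is the squared modulus of [z^* (z^2 + g z + h) = (x + g) N + h x + i y (N - h)]. *)
have N_Q : N * Q - N * (g ^+ 2 * N) =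
    ((x + g) * N + h * x) ^+ 2 - (g * N) ^+ 2 + (y * (N - h)) ^+ 2.
  by rewrite /N /Q; ring.
have N_gt0 : 0 < N by rewrite lt_def N_neq0.
rewrite -(ler_pM2l N_gt0) -subr_ge0 N_Q.
have := sqr_ge0 (y * (N - h)); lra.
Qed.
End Modulus.

(* With [p = mu + beta0 V], [d = delta], [g = c + b A] and [h = a A b V], this is
   the characteristic polynomial of the Jacobian at an equilibrium where
   [a V = sigma] and [omega beta0 T = delta (c + b A)]. *)
Definition interior_charpoly {K : comPzRingType} (mu p d g h z : K) : K :=
  (z + p) * (z + d) * (z ^+ 2 + g * z + h) - d * g * z * (z + mu).

Lemma interior_charpoly_neq0 (R : rcfType) (mu p d g h : R) (z : R[i]) :
  0 <= mu -> mu < p -> 0 < d -> 0 < g -> 0 < h -> 0 <= complex.Re z ->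
  interior_charpoly mu%:C p%:C d%:C g%:C h%:C z != 0.
Proof.
move=> mu0 mu_p d0 g0 h0 x0.
have [-> | z_neq0] := eqVneq z 0.
  have -> : interior_charpoly mu%:C p%:C d%:C g%:C h%:C 0 = (p * d * h)%:C.
    by rewrite /interior_charpoly !rmorphM /=; ring.
  by rewrite fmorph_eq0 !mulf_neq0 // gt_eqF // (le_lt_trans mu0 mu_p).
have z_gt0 : 0 < normc z.
  by rewrite lt_def normc_ge0 andbT; apply: contra_neq z_neq0 => /eq0_normc.
have lt_norm : normc (d%:C * g%:C * z * (z + mu%:C)) <
    normc ((z + p%:C) * (z + d%:C) * (z ^+ 2 + g%:C * z + h%:C)).
  rewrite !normcM !normc_real ?ltW //.
  have dgz_gt0 : 0 < d * g * normc z by rewrite !mulr_gt0.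
  have dgz_le : d * g * normc z <=
      normc (z + d%:C) * normc (z ^+ 2 + g%:C * z + h%:C).
    rewrite -mulrA ler_pM ?(ltW d0) ?mulr_ge0 ?(ltW g0) ?normc_ge0 //.
      exact: ler_normc_addr (ltW d0).
    exact: ler_normc_quadratic (ltW g0) (ltW h0).
  apply: (lt_le_trans (y := d * g * normc z * normc (z + p%:C))).
    by rewrite ltr_pM2l // ltr_normc_addr.
  by rewrite [X in X <= _]mulrC -[X in _ <= X]mulrA ler_wpM2l ?normc_ge0.
by rewrite subr_eq0; apply: contraTneq lt_norm => ->; rewrite ltxx.
Qed.

(* The hypotheses are the coordinates of [v *m J = z *: v] for
   [J = [[-(m + q), 0, -k, 0]; [q, -d, k, 0]; [0, w, -g, -e]; [0, 0, f, 0]]]. *)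
Lemma left_eigen_charpoly_eq0 {K : comPzRingType} (m q d w k g e f z v0 v1 v2 v3 : K) :
  w * k = d * g ->
  q * v1 = (z + (m + q)) * v0 ->
  w * v2 = (z + d) * v1 ->
  k * (v1 - v0) + f * v3 = (z + g) * v2 ->
  - e * v2 = z * v3 ->
  v0 * interior_charpoly m (m + q) d g (e * f) z = 0.
Proof.
move=> wk e0 e1 e2 e3.
set Q := z ^+ 2 + g * z + e * f.
have e23 : k * z * (v1 - v0) = Q * v2.
  have -> : k * z * (v1 - v0) = z * (k * (v1 - v0) + f * v3) - f * (z * v3) by ring.
  by rewrite e2 -e3 /Q; ring.
rewrite /interior_charpoly -/Q -wk.
have -> : v0 * ((z + (m + q)) * (z + d) * Q - w * k * z * (z + m)) =
    (z + d) * Q * ((z + (m + q)) * v0) - w * k * z * (z + m) * v0 by ring.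
rewrite -e0.
have -> : (z + d) * Q * (q * v1) = q * Q * ((z + d) * v1) by ring.
rewrite -e1.
have -> : q * Q * (w * v2) = w * q * (Q * v2) by ring.
rewrite -e23.
have -> : w * q * (k * z * (v1 - v0)) - w * k * z * (z + m) * v0 =
    w * k * z * (q * v1 - (z + (m + q)) * v0) by ring.
by rewrite e0 subrr mulr0.
Qed.

Lemma quadratic_nonneg_root (R : rcfType) (s t : R) :
  t <= 0 -> exists2 l : R, 0 <= l & l ^+ 2 + s * l + t = 0.
Proof.
move=> t_le0; set D := s ^+ 2 - 4 * t.
have D_ge0 : 0 <= D by rewrite /D; nra.
set r := Num.sqrt D.
have r_ge0 : 0 <= r := sqrtr_ge0 D.
have r2 : r ^+ 2 = D := sqr_sqrtr D_ge0.
exists ((r - s) / 2).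
  apply: divr_ge0 => //; rewrite subr_ge0.
  rewrite leNgt; apply/negP => r_lt_s.
  have : r ^+ 2 < s ^+ 2 by rewrite ltr_pXn2r ?nnegrE // (le_trans r_ge0 (ltW r_lt_s)).
  by rewrite r2 /D; lra.
have -> : ((r - s) / 2) ^+ 2 + s * ((r - s) / 2) + t = (r ^+ 2 - D) / 4.
  by rewrite /D; field.
by rewrite r2 subrr mul0r.
Qed.

Lemma row4_eq0 {K : zmodType} (v : 'rV[K]_4) :
  v 0 0 = 0 -> v 0 1 = 0 -> v 0 2 = 0 -> v 0 3 = 0 -> v = 0.
Proof.
move=> v0 v1 v2 v3; apply/rowP => -[[|[|[|[|j]]]] lt_j4] //; rewrite mxE.
- by rewrite -v0; congr (v _ _); apply: val_inj.
- by rewrite -v1; congr (v _ _); apply: val_inj.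
- by rewrite -v2; congr (v _ _); apply: val_inj.
- by rewrite -v3; congr (v _ _); apply: val_inj.
Qed.

Section Jacobian.
Variable R : realType.
Variables (mu beta0 delta omega c b a sigma T I V A : R).
Local Notation J := (jacobian mu beta0 delta omega c b a sigma T I V A).

Lemma jacobian_left_eigenE (z : R[i]) (v : 'rV_4) :
  v *m map_mx (real_complex R) J = z *: v ->
  [/\ (beta0 * V)%:C * v 0 1 = (z + (mu%:C + (beta0 * V)%:C)) * v 0 0,
      omega%:C * v 0 2 = (z + delta%:C) * v 0 1,
      (beta0 * T)%:C * (v 0 1 - v 0 0) + (a * A)%:C * v 0 3 =
        (z + (c + b * A)%:C) * v 0 2 &
      - (b * V)%:C * v 0 2 + (a * V - sigma)%:C * v 0 3 = z * v 0 3].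
Proof.
have ord0E : ord0 = 0 :> 'I_4 by apply: val_inj.
have ord1E : lift ord0 ord0 = 1 :> 'I_4 by apply: val_inj.
have ord2E : lift ord0 (lift ord0 ord0) = 2 :> 'I_4 by apply: val_inj.
have ord3E : lift ord0 (lift ord0 (lift ord0 ord0)) = 3 :> 'I_4 by apply: val_inj.
move=> /rowP vJ.
have := vJ 0; have := vJ 1; have := vJ 2; have := vJ 3.
rewrite !mxE !big_ord_recl !big_ord0 !mxE /= ord0E ord1E ord2E ord3E.
rewrite !(rmorphN, rmorphB, rmorphD, rmorphM, rmorph0) => e3 e2 e1 e0.
by split; rewrite ?mulrDl -?e0 -?e1 -?e2 -?e3; ring.
Qed.

Lemma not_stable_of_left_eigen (k : R) (u : 'rV_4) :
  u != 0 -> u *m J = k *: u -> 0 <= k ->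
  ~ is_stable mu beta0 delta omega c b a sigma T I V A.
Proof.
move=> u_neq0 uJ k_ge0 stable.
have : eigenvalue (map_mx (real_complex R) J) k%:C.
  by rewrite eigenvalue_map; apply/eigenvalueP; exists u.
by move/stable; rewrite -complexRe ltcR ltNge k_ge0.
Qed.

Lemma not_stable_antibody_free : A = 0 -> sigma < a * V ->
  ~ is_stable mu beta0 delta omega c b a sigma T I V A.
Proof.
move=> A0 growth; apply: (@not_stable_of_left_eigen (a * V - sigma) (delta_mx 0 3)).
- by apply/eqP => /matrixP/(_ 0 3); rewrite !mxE /= => /eqP; rewrite oner_eq0.
- by rewrite -rowE; apply/rowP => -[[|[|[|[|j]]]] lt_j4] //; rewrite !mxE /= ?A0; ring.
- by rewrite subr_ge0 ltW.
Qed.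

Lemma not_stable_virus_free : V = 0 -> A = 0 -> 0 < delta ->
  delta * c <= omega * (beta0 * T) ->
  ~ is_stable mu beta0 delta omega c b a sigma T I V A.
Proof.
move=> V0 A0 delta_gt0 growth.
have [l l_ge0 root] : exists2 l : R, 0 <= l &
    l ^+ 2 + (delta + c) * l + (delta * c - omega * (beta0 * T)) = 0.
  by apply: quadratic_nonneg_root; rewrite subr_le0.
have growth_l : omega * (beta0 * T) = (l + c) * (l + delta).
  by apply/eqP; rewrite -subr_eq0 -oppr_eq0 -root; apply/eqP; ring.
apply: (@not_stable_of_left_eigen l (\row_j [:: 0; omega; l + delta; 0]`_j)) => //.
  by apply/eqP => /matrixP/(_ 0 2); rewrite !mxE /=; apply/eqP; rewrite gt_eqF ?ltr_wpDl.
apply/rowP => -[[|[|[|[|j]]]] lt_j4] //.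
all: by rewrite !mxE !big_ord_recl !big_ord0 !mxE /= ?V0 ?A0 ?growth_l; ring.
Qed.

Lemma is_stable_interior :
  0 < mu -> 0 < beta0 -> 0 < delta -> 0 < omega -> 0 < c -> 0 < b -> 0 < a ->
  0 < V -> 0 < A -> a * V = sigma -> omega * (beta0 * T) = delta * (c + b * A) ->
  is_stable mu beta0 delta omega c b a sigma T I V A.
Proof.
move=> mu_gt0 beta0_gt0 delta_gt0 omega_gt0 c_gt0 b_gt0 a_gt0 V_gt0 A_gt0 aV_eq kT_eq.
move=> z /eigenvalueP[v /jacobian_left_eigenE[e0 e1 e2 e3] v_neq0].
rewrite aV_eq subrr rmorph0 mul0r addr0 in e3.
have wk : omega%:C * (beta0 * T)%:C = delta%:C * (c + b * A)%:C by rewrite -!rmorphM kT_eq.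
have /eqP := left_eigen_charpoly_eq0 wk e0 e1 e2 e3.
rewrite mulf_eq0 => /orP[/eqP v0_eq0 | /eqP char_eq0].
  have v1_eq0 : v 0 1 = 0.
    by move/eqP: e0; rewrite v0_eq0 mulr0 mulf_eq0 fmorph_eq0 gt_eqF ?mulr_gt0 // => /eqP.
  have v2_eq0 : v 0 2 = 0.
    by move/eqP: e1; rewrite v1_eq0 mulr0 mulf_eq0 fmorph_eq0 gt_eqF // => /eqP.
  have v3_eq0 : v 0 3 = 0.
    move/eqP: e2; rewrite v0_eq0 v1_eq0 v2_eq0 subrr !mulr0 add0r mulf_eq0.
    by rewrite fmorph_eq0 gt_eqF ?mulr_gt0 // => /eqP.
  by move/negP: v_neq0; case; apply/eqP/row4_eq0.
rewrite -complexRe ltcR ltNge; apply/negP => Re_ge0.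
have p_gt_mu : mu < mu + beta0 * V by rewrite ltrDl mulr_gt0.
have g_gt0 : 0 < c + b * A by rewrite addr_gt0 ?mulr_gt0.
have h_gt0 : 0 < b * V * (a * A) by rewrite !mulr_gt0.
have /eqP[] := interior_charpoly_neq0 (ltW mu_gt0) p_gt_mu delta_gt0 g_gt0 h_gt0 Re_ge0.
by rewrite -char_eq0 /interior_charpoly; ring.
Qed.
End Jacobian.

Section Equilibria.
Variables (R : realType) (Lam mu beta0 delta omega c b a sigma : R).
Hypotheses (mu_gt0 : 0 < mu) (beta0_gt0 : 0 < beta0)
  (delta_gt0 : 0 < delta) (omega_gt0 : 0 < omega) (c_gt0 : 0 < c)
  (b_gt0 : 0 < b) (a_gt0 : 0 < a) (sigma_gt0 : 0 < sigma).

Local Notation R0 := (beta0 * omega * Lam / (c * delta * mu)).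
Local Notation Vis := ((R0 - 1) * mu / beta0).
Local Notation Vt := (sigma / a).
Local Notation Tt := (Lam / (mu + beta0 * Vt)).
Local Notation It := (beta0 * Lam * Vt / (delta * (mu + beta0 * Vt))).
Local Notation At := (c * beta0 * (Vis - Vt) / (b * (mu + beta0 * Vt))).
Local Notation equilibrium := (is_equilibrium Lam mu beta0 delta omega c b a sigma).
Local Notation stable := (is_stable mu beta0 delta omega c b a sigma).

Lemma equilibrium_antibody_cases T I V A : equilibrium T I V A -> A = 0 \/ V = Vt.
Proof.
case=> _ _ _ eA.
have /eqP : (a * V - sigma) * A = 0 by rewrite -eA /fA; ring.
rewrite mulf_eq0 subr_eq0 => /orP[/eqP aV | /eqP]; [right | by left].
by rewrite -aV mulrC mulKf ?gt_eqF.
Qed.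

Lemma R0_gt1 : Vt < Vis -> c * delta * mu < beta0 * omega * Lam.
Proof.
move=> Vt_lt_Vis; have : 0 < Vis by apply: lt_trans Vt_lt_Vis; rewrite divr_gt0.
rewrite !pmulr_lgt0 ?invr_gt0 // subr_gt0 ltr_pdivlMr ?mul1r //.
by rewrite !mulr_gt0.
Qed.

Lemma virus_free_equilibrium_unstable T I : Vt < Vis ->
  equilibrium T I 0 0 -> ~ stable T I 0 0.
Proof.
move=> /R0_gt1 R0_gt1 [eT _ _ _]; apply: not_stable_virus_free => //.
have -> : T = Lam / mu.
  by apply: (mulIf (lt0r_neq0 mu_gt0)); rewrite divfK ?gt_eqF //; move: eT; rewrite /fT; lra.
rewrite mulrA mulrA [omega * beta0]mulrC ler_pdivlMr //.
by rewrite [delta * c]mulrC ltW.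
Qed.

Lemma antibody_free_equilibrium_unstable T I V : Vt < Vis -> V != 0 ->
  equilibrium T I V 0 -> ~ stable T I V 0.
Proof.
move=> Vt_lt_Vis V_neq0 [eT eI eV _]; apply: not_stable_antibody_free => //.
rewrite /fT /fI /fV mulr0 mul0r subr0 in eT eI eV.
have kT : omega * beta0 * T = delta * c.
  have /eqP : (omega * beta0 * T - delta * c) * V = 0.
    have -> : (omega * beta0 * T - delta * c) * V =
      omega * (beta0 * V * T - delta * I) + delta * (omega * I - c * V) by ring.
    by rewrite eI eV !mulr0 addr0.
  by rewrite mulf_eq0 (negbTE V_neq0) orbF subr_eq0 => /eqP.
have T_eq : T = delta * c / (omega * beta0).
  by rewrite -kT mulrC mulKf // mulf_neq0 ?lt0r_neq0.
have L_eq : Lam = T * (mu + beta0 * V) by lra.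
have -> : V = Vis.
  by rewrite L_eq T_eq; field; rewrite !lt0r_neq0.
by rewrite mulrC -ltr_pdivrMr.
Qed.

Lemma antibody_equilibriumE T I A : equilibrium T I Vt A ->
  [/\ T = Tt, I = It & A = At].
Proof.
have Vt_gt0 : 0 < Vt by rewrite divr_gt0.
have D_gt0 : 0 < mu + beta0 * Vt by rewrite addr_gt0 // mulr_gt0.
case=> eT eI eV _; rewrite /fT /fI /fV in eT eI eV.
(* With [sigma / a] opaque, the side conditions of [field] are positive atoms. *)
set v := sigma / a in Vt_gt0 D_gt0 eT eI eV *.
have T_eq : T = Lam / (mu + beta0 * v).
  by apply: (mulIf (lt0r_neq0 D_gt0)); rewrite divfK ?gt_eqF //; lra.
have I_eq : I = beta0 * Lam * v / (delta * (mu + beta0 * v)).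
  apply: (mulfI (lt0r_neq0 delta_gt0)); have -> : delta * I = beta0 * v * T by lra.
  by rewrite T_eq; field; rewrite !lt0r_neq0.
split=> //.
apply: (mulfI (lt0r_neq0 b_gt0)); apply: (mulIf (lt0r_neq0 Vt_gt0)).
have -> : b * A * v = omega * I - c * v by lra.
by rewrite I_eq; field; rewrite !lt0r_neq0.
Qed.

Lemma antibody_equilibrium : equilibrium Tt It Vt At.
Proof.
have Vt_gt0 : 0 < Vt by rewrite divr_gt0.
have D_gt0 : 0 < mu + beta0 * Vt by rewrite addr_gt0 // mulr_gt0.
have aVt : a * Vt = sigma by rewrite mulrC divfK ?gt_eqF.
rewrite /is_equilibrium /fT /fI /fV /fA aVt subrr.
set v := sigma / a in Vt_gt0 D_gt0 *.
by split=> //; field; rewrite !lt0r_neq0.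
Qed.

Lemma antibody_equilibrium_stable : Vt < Vis -> stable Tt It Vt At.
Proof.
move=> Vt_lt_Vis.
have Vt_gt0 : 0 < Vt by rewrite divr_gt0.
have D_gt0 : 0 < mu + beta0 * Vt by rewrite addr_gt0 // mulr_gt0.
have At_gt0 : 0 < At by rewrite !divr_gt0 ?mulr_gt0 ?subr_gt0.
apply: is_stable_interior => //; first by rewrite mulrC divfK ?gt_eqF.
set v := sigma / a in Vt_gt0 D_gt0 *.
by field; rewrite !lt0r_neq0.
Qed.

Lemma stable_equilibriumP : Vt < Vis -> forall T I V A,
  equilibrium T I V A /\ stable T I V A <-> [/\ T = Tt, I = It, V = Vt & A = At].
Proof.
move=> Vt_lt_Vis T I V A; split=> [[equil stab] | [-> -> -> ->]]; last first.
  by split; [exact: antibody_equilibrium | exact: antibody_equilibrium_stable].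
have [A0 | V_eq] := equilibrium_antibody_cases equil; last first.
  by move: equil; rewrite V_eq => /antibody_equilibriumE[-> -> ->].
move: equil stab; rewrite A0; have [-> | V_neq0] := eqVneq V 0.
  by move=> /(virus_free_equilibrium_unstable Vt_lt_Vis).
by move=> /(antibody_free_equilibrium_unstable Vt_lt_Vis V_neq0).
Qed.

End Equilibria.

Theorem proposition1 (R : realType) (Lam mu beta0 delta omega c b a sigma : R) :
  0 < Lam -> 0 < mu -> 0 < beta0 -> 0 < delta -> 0 < omega ->
  0 < c -> 0 < b -> 0 < a -> 0 < sigma ->
  let R0 := beta0 * omega * Lam / (c * delta * mu) in
  let Vis := (R0 - 1) * mu / beta0 in
  let Vt := sigma / a in
  delta > mu -> Vis > Vt ->
  forall T I V A : R,
    (is_equilibrium Lam mu beta0 delta omega c b a sigma T I V A /\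
     is_stable mu beta0 delta omega c b a sigma T I V A) <->
    [/\ T = Lam / (mu + beta0 * Vt),
        I = beta0 * Lam * Vt / (delta * (mu + beta0 * Vt)),
        V = Vt &
        A = c * beta0 * (Vis - Vt) / (b * (mu + beta0 * Vt))].
Proof.
move=> _ mu_gt0 beta0_gt0 delta_gt0 omega_gt0 c_gt0 b_gt0 a_gt0 sigma_gt0.
move=> R0 Vis Vt _ Vt_lt_Vis.
exact: stable_equilibriumP.
Qed.
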